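(* Assume that the optimizer $x^*$ of the DC-OPF problem satisfies $x^*_n>0$ for all $n\in\{1,\dots,N\}$. Then there exists a unique efficient bid $b^*\in\mathbb R^N_{\ge0}$, given by $b^*_n=\nabla f_n(x^*_n)=2a_nx^*_n+c_n$ for all $n$.
   Context: Network: a directed graph $\mathcal G=(\mathcal V,\mathcal E)$ with buses $\mathcal V=\{1,\dots,N_b\}$ and power lines $\mathcal E$; $\mathcal N_i^+=\{j:(i,j)\in\mathcal E\}$, $\mathcal N_i^-=\{j:(j,i)\in\mathcal E\}$. Each line $(i,j)$ carries flow $z_{ij}\in\mathbb R$ with limit $\bar z_{ij}>0$. There are $N$ generators labelled $1,\dots,N$; $G_i$ is the (possibly empty) set of generators at bus $i$, the $G_i$ partition $\{1,\dots,N\}$. Bus $i$ has load $y_i\ge0$. Generator $n$ has cost $f_n(x)=a_nx^2+c_nx$ with $a_n>0$, $c_n\ge 0$. DC-OPF: minimize $\sum_{n=1}^N f_n(x_n)$ over $(x,z)$ subject to $\sum_{j\in\mathcal N_i^+}z_{ij}-\sum_{j\in\mathcal N_i^-}z_{ji}=\sum_{n\in G_i}x_n-y_i$ for all buses $i$, $-\bar z_{ij}\le z_{ij}\le\bar z_{ij}$ for all $(i,j)\in\mathcal E$, and $x\ge 0$; assumed feasible, with optimizer $(x^*,z^* )$, $x^*$ unique. S-DC-OPF given bids $b\in\mathbb R^N_{\ge0}$: same constraints, objective $\sum_n b_nx_n$. Efficient bid: $b^*\ge0$ such that $(x^*,z^* )$ is an optimizer of S-DC-OPF with bids $b^*$ and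 $x^*_n=\arg\max_{x\ge0}(b^*_nx-f_n(x))$ for all $n$. *)

(* scalars in an arbitrary real field R (the statement is
   purely algebraic / order-theoretic; it specialises to the reals). *)
From HB Require Import structures.
From mathcomp Require Import all_boot all_order all_algebra.
Set Implicit Arguments. Unset Strict Implicit. Unset Printing Implicit Defensive.
Import Order.TTheory GRing.Theory Num.Theory.
Local Open Scope ring_scope.

(* Network data:
   - buses      : 'I_Nb
   - lines      : E : {set 'I_Nb * 'I_Nb}  (directed pairs (i,j))
   - line limit : zbar : 'I_Nb * 'I_Nb -> R   (relevant on E)
   - generators : 'I_N, generator n sits at bus gb n, so G_i = [set n | gb n == i]
   - loads      : y : 'I_Nb -> R
   - flows      : z : 'I_Nb * 'I_Nb -> R (only values on E matter)
   - dispatch   : x : 'I_N -> R *)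

Definition gcost (R : realFieldType) (N : nat) (a c : 'I_N -> R) (n : 'I_N) (t : R) : R :=
  a n * t ^+ 2 + c n * t.

(* Feasible set of DC-OPF (and S-DC-OPF: same constraints). *)
Definition opf_feasible (R : realFieldType) (Nb N : nat)
    (E : {set 'I_Nb * 'I_Nb}) (zbar : 'I_Nb * 'I_Nb -> R)
    (gb : 'I_N -> 'I_Nb) (y : 'I_Nb -> R)
    (x : 'I_N -> R) (z : 'I_Nb * 'I_Nb -> R) : Prop :=
  (forall i : 'I_Nb,
      \sum_(e in E | e.1 == i) z e - \sum_(e in E | e.2 == i) z e
      = \sum_(n | gb n == i) x n - y i)
  /\ (forall e, e \in E -> - zbar e <= z e <= zbar e)
  /\ (forall n, 0 <= x n).

Definition opf_optimizer (R : realFieldType) (Nb N : nat)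
    (E : {set 'I_Nb * 'I_Nb}) (zbar : 'I_Nb * 'I_Nb -> R)
    (gb : 'I_N -> 'I_Nb) (y : 'I_Nb -> R)
    (obj : ('I_N -> R) -> R)
    (x : 'I_N -> R) (z : 'I_Nb * 'I_Nb -> R) : Prop :=
  opf_feasible E zbar gb y x z /\
  forall x' z', opf_feasible E zbar gb y x' z' -> obj x <= obj x'.

Definition dcopf_obj (R : realFieldType) (N : nat) (a c : 'I_N -> R)
    (x : 'I_N -> R) : R :=
  \sum_(n < N) gcost a c n (x n).

Definition sdcopf_obj (R : realFieldType) (N : nat) (b : 'I_N -> R)
    (x : 'I_N -> R) : R :=
  \sum_(n < N) b n * x n.

Definition is_argmax_profit (R : realFieldType) (N : nat) (a c : 'I_N -> R)
    (n : 'I_N) (bn t : R) : Prop :=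
  0 <= t /\ forall s, 0 <= s -> bn * s - gcost a c n s <= bn * t - gcost a c n t.

Definition efficient_bid (R : realFieldType) (Nb N : nat)
    (E : {set 'I_Nb * 'I_Nb}) (zbar : 'I_Nb * 'I_Nb -> R)
    (gb : 'I_N -> 'I_Nb) (y : 'I_Nb -> R) (a c : 'I_N -> R)
    (xs : 'I_N -> R) (zs : 'I_Nb * 'I_Nb -> R) (b : 'I_N -> R) : Prop :=
  (forall n, 0 <= b n)
  /\ opf_optimizer E zbar gb y (sdcopf_obj b) xs zs
  /\ (forall n, is_argmax_profit a c n (b n) (xs n)).

(* The feasible set is convex, so the optimizer [xs] of the convex DC-OPF
   satisfies the first-order condition [sum_n f_n'(xs_n) (x'_n - xs_n) >= 0] for
   every feasible [x'].  With the linear bids [b_n = f_n'(xs_n)] this says exactly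
   that [xs] minimizes the bid cost, and each [xs_n] maximizes the profit
   [b_n s - f_n s] because the profit gap is [a_n (s - xs_n)^2].  Conversely, as
   [xs_n > 0] is interior, the profit can only be maximal at [xs_n] if its
   derivative [b_n - f_n'(xs_n)] vanishes.
   Both limiting arguments are instances of: if [g + t Q >= 0] for all
   [t] in (0, 1], then [g >= 0]. *)
From HB Require Import structures.
From mathcomp Require Import all_boot all_order all_algebra.
From mathcomp Require Import ring lra.
Set Implicit Arguments. Unset Strict Implicit. Unset Printing Implicit Defensive.
Import Order.TTheory GRing.Theory Num.Theory.
Local Open Scope ring_scope.

Section RealField.

Variable R : realFieldType.

Lemma ge0_of_affine_ge0 (g Q : R) :
  (forall t, 0 < t -> t <= 1 -> 0 <= g + t * Q) -> 0 <= g.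
Proof.
move=> hgQ; rewrite leNgt; apply/negP => g_lt0.
have den_gt0 : 0 < `|Q| - g by have := normr_ge0 Q; lra.
pose t := - g / (`|Q| - g).
have t_gt0 : 0 < t by apply: divr_gt0; lra.
have t_le1 : t <= 1 by rewrite ler_pdivrMr //; have := normr_ge0 Q; lra.
have tQ_lt : t * `|Q| < - g.
  rewrite /t mulrAC ltr_pdivrMr //; have := normr_ge0 Q; nra.
have := hgQ t t_gt0 t_le1; have := ler_norm Q; nra.
Qed.

Lemma sumr_lerp (I : finType) (P : pred I) (u v : I -> R) (t : R) :
  \sum_(i | P i) (u i + t * (v i - u i)) =
  \sum_(i | P i) u i + t * (\sum_(i | P i) v i - \sum_(i | P i) u i).
Proof. by rewrite big_split /= -mulr_sumr sumrB. Qed.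

Lemma opf_feasible_lerp (Nb N : nat) (E : {set 'I_Nb * 'I_Nb})
    (zbar : 'I_Nb * 'I_Nb -> R) (gb : 'I_N -> 'I_Nb) (y : 'I_Nb -> R)
    x z x' z' (t : R) :
  0 <= t -> t <= 1 ->
  opf_feasible E zbar gb y x z -> opf_feasible E zbar gb y x' z' ->
  opf_feasible E zbar gb y (fun n => x n + t * (x' n - x n))
                           (fun e => z e + t * (z' e - z e)).
Proof.
move=> t_ge0 t_le1 [bal [lim pos]] [bal' [lim' pos']]; split; [|split].
- move=> i; rewrite !sumr_lerp -[\sum_(n | gb n == i) x n](subrK (y i)).
  by rewrite -[\sum_(n | gb n == i) x' n](subrK (y i)) -bal -bal'; ring.
- move=> e eE; have /andP[l u] := lim e eE; have /andP[l' u'] := lim' e eE.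
  by apply/andP; split; nra.
- by move=> n; have := pos n; have := pos' n; nra.
Qed.

Lemma dcopf_obj_lerp (N : nat) (a c x x' : 'I_N -> R) (t : R) :
  dcopf_obj a c (fun n => x n + t * (x' n - x n)) - dcopf_obj a c x =
  t * (\sum_(n < N) (2 * a n * x n + c n) * (x' n - x n)
       + t * \sum_(n < N) a n * (x' n - x n) ^+ 2).
Proof.
rewrite /dcopf_obj -sumrB mulr_sumr mulrDr !mulr_sumr -big_split /=.
by apply: eq_bigr => n _; rewrite /gcost; ring.
Qed.

Lemma dcopf_first_order (Nb N : nat) (E : {set 'I_Nb * 'I_Nb})
    (zbar : 'I_Nb * 'I_Nb -> R) (gb : 'I_N -> 'I_Nb) (y : 'I_Nb -> R)
    (a c xs x' : 'I_N -> R) zs z' :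
  opf_optimizer E zbar gb y (dcopf_obj a c) xs zs ->
  opf_feasible E zbar gb y x' z' ->
  0 <= \sum_(n < N) (2 * a n * xs n + c n) * (x' n - xs n).
Proof.
move=> [feas min] feas'; apply: ge0_of_affine_ge0 => t t_gt0 t_le1.
have := min _ _ (opf_feasible_lerp (ltW t_gt0) t_le1 feas feas').
by rewrite -subr_ge0 dcopf_obj_lerp pmulr_rge0 //; apply: id.
Qed.

Lemma profit_gap (N : nat) (a c : 'I_N -> R) (n : 'I_N) (bn x s : R) :
  (bn * x - gcost a c n x) - (bn * s - gcost a c n s) =
  a n * (s - x) ^+ 2 - (bn - 2 * a n * x - c n) * (s - x).
Proof. by rewrite /gcost; ring. Qed.

Lemma argmax_profit_marginal (N : nat) (a c : 'I_N -> R) (n : 'I_N) (x : R) :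
  0 <= a n -> 0 <= x -> is_argmax_profit a c n (2 * a n * x + c n) x.
Proof.
move=> a_ge0 x_ge0; split=> // s _.
rewrite -subr_ge0 profit_gap.
have -> : 2 * a n * x + c n - 2 * a n * x - c n = 0 by ring.
by rewrite mul0r subr0 mulr_ge0 // sqr_ge0.
Qed.

Lemma marginal_of_argmax_profit (N : nat) (a c : 'I_N -> R) (n : 'I_N) (bn x : R) :
  0 < x -> is_argmax_profit a c n bn x -> bn = 2 * a n * x + c n.
Proof.
move=> x_gt0 [_ maxx]; set d := bn - 2 * a n * x - c n.
have gap h : 0 <= h <= x -> `|d| * h <= a n * h ^+ 2.
  move=> /andP[h_ge0 h_lex].
  move: (maxx (x + h) ltac:(lra)) (maxx (x - h) ltac:(lra)).
  rewrite -!(subr_ge0 (bn * _ - _)) !profit_gap -/d.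
  have -> : x + h - x = h by ring.
  have -> : x - h - x = - h by ring.
  rewrite sqrrN mulrN opprK => up dn.
  by case: (ger0P d) => _; rewrite ?ger0_norm ?ltr0_norm //; lra.
suff : 0 <= - `|d| by rewrite oppr_ge0 normr_le0 => /eqP; rewrite /d; lra.
apply: (ge0_of_affine_ge0 (Q := a n * x)) => t t_gt0 t_le1.
have tx_gt0 : 0 < t * x by apply: mulr_gt0.
have := gap (t * x) ltac:(apply/andP; split; nra).
rewrite -(pmulr_rge0 _ tx_gt0).
have -> : t * x * (- `|d| + t * (a n * x)) = a n * (t * x) ^+ 2 - `|d| * (t * x) by ring.
lra.
Qed.

End RealField.

Theorem lemma3p2 (R : realFieldType) (Nb N : nat)
    (E : {set 'I_Nb * 'I_Nb}) (zbar : 'I_Nb * 'I_Nb -> R)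
    (gb : 'I_N -> 'I_Nb) (y : 'I_Nb -> R) (a c : 'I_N -> R)
    (xs : 'I_N -> R) (zs : 'I_Nb * 'I_Nb -> R)
    (hzbar : forall e, e \in E -> 0 < zbar e)
    (hy : forall i, 0 <= y i)
    (ha : forall n, 0 < a n)
    (hc : forall n, 0 <= c n)
    (hopt : opf_optimizer E zbar gb y (dcopf_obj a c) xs zs)
    (hpos : forall n, 0 < xs n) :
  efficient_bid E zbar gb y a c xs zs (fun n => 2 * a n * xs n + c n)
  /\ forall b : 'I_N -> R, efficient_bid E zbar gb y a c xs zs b ->
       forall n, b n = 2 * a n * xs n + c n.
Proof.
split.
- split; [|split].
  + move=> n; have := ha n; have := hpos n; have := hc n; nra.
  + split=> [|x' z' feas']; first by case: hopt.
    rewrite -subr_ge0 /sdcopf_obj -sumrB.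
    under eq_bigr do rewrite -mulrBr.
    exact: dcopf_first_order hopt feas'.
  + by move=> n; apply: argmax_profit_marginal; apply: ltW.
- by move=> b [_ [_ hb]] n; apply: marginal_of_argmax_profit.
Qed.
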